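(* Let $n\ge 2$ and $0<r<1$, and let \[\mathcal{S}_r = \left\{\lambda\begin{pmatrix} 1 & x^*\\ y & yx^*\end{pmatrix} : x,y\in\mathbb{C}^{n-1},\ \|x\|<r,\ \|y\|<r,\ \lambda\in\mathbb{C}\right\}\subseteq\mathcal{M}_n(\mathbb{C}).\] Then $\mathcal{S}_r$ is a semigroup and it is $\frac{4r^2}{(1-r^2)^2}$-submultiplicative.
   Context: Here $\|\cdot\|$ is the Euclidean norm, $x^*$ is the conjugate transpose of a column vector, $\sigma(M)$ is the spectrum and $\rho(M)$ the spectral radius of a matrix $M$. A semigroup $\mathcal{S}\subseteq\mathcal{M}_n(\mathbb{C})$ is called $\varepsilon$-submultiplicative if for all $A,B\in\mathcal{S}$ and every $\gamma\in\sigma(AB)$ there exist $\alpha\in\sigma(A)$ and $\beta\in\sigma(B)$ such that $|\gamma-\alpha\beta|\le\varepsilon\,\rho(A)\rho(B)$. *)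

From HB Require Import structures.
From mathcomp Require Import all_boot all_order all_algebra.
From mathcomp Require Import complex.
From mathcomp Require Import reals.
Set Implicit Arguments. Unset Strict Implicit. Unset Printing Implicit Defensive.
Import Order.TTheory GRing.Theory Num.Theory.
Local Open Scope ring_scope.

Section Defs.
Variable C : numClosedFieldType.

Definition vnorm m (x : 'cV[C]_m) : C := sqrtC (\sum_i `|x i 0| ^+ 2).

Definition cadj m (x : 'cV[C]_m) : 'rV[C]_m := (map_mx Num.conj x)^T.

Definition spectrum n (M : 'M[C]_n) : pred C := eigenvalue M.

Definition eigseq n (M : 'M[C]_n) : seq C :=
  sval (closed_field_poly_normal (char_poly M)).

Definition specrad n (M : 'M[C]_n) : C :=
  \big[Num.max/0]_(a <- eigseq M) `|a|.

Definition is_semigroup n (S : 'M[C]_n -> Prop) : Prop :=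
  forall A B, S A -> S B -> S (A *m B).

Definition eps_submultiplicative n (eps : C) (S : 'M[C]_n -> Prop) : Prop :=
  forall A B, S A -> S B ->
  forall g, spectrum (A *m B) g ->
  exists a b, [/\ spectrum A a, spectrum B b &
                 `|g - a * b| <= eps * specrad A * specrad B].

Definition Sr m (r : C) : 'M[C]_(1 + m) -> Prop :=
  fun M => exists (x y : 'cV[C]_m) (lam : C),
    [/\ vnorm x < r, vnorm y < r &
        M = lam *: block_mx (1%:M : 'M[C]_1) (cadj x) y (y *m cadj x)].
End Defs.

Arguments Sr {C} m r _.
Arguments vnorm {C} {m} x.
Arguments cadj {C} {m} x.
Arguments specrad {C} {n} M.
Arguments spectrum {C} {n} M _.
Arguments is_semigroup {C} {n} S.
Arguments eps_submultiplicative {C} {n} eps S.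

From mathcomp Require Import all_boot all_order all_algebra.
From mathcomp Require Import complex.
From mathcomp Require Import reals.
From mathcomp Require Import ring.

(* Every element of S_r is A = λ u v^* with u = (1, y) and v = (1, x), a
   rank-one matrix: its eigenvalues are 0 (as n >= 2) and λ v^* u = λ (1 + <x, y>).
   The product of λ u v^* and μ u' v'^* is λ μ (1 + <x, y'>) u v'^*, again in S_r,
   with nonzero eigenvalue λ μ (1 + <x, y'>) (1 + <x', y>).  By Cauchy-Schwarz all
   the inner products have modulus at most q = r^2, and for |a|, |b|, |c|, |d| <= q
   the elementary estimate
     |(1 + a)(1 + b) - (1 + c)(1 + d)| <= 4 q / (1 - q)^2 |1 + c| |1 + d|
   compares it with the product of the eigenvalues λ (1 + <x, y>) and
   μ (1 + <x', y'>), whose moduli are at most ρ(A) and ρ(B). *)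

Set Implicit Arguments.
Unset Strict Implicit.
Unset Printing Implicit Defensive.

Import Order.TTheory GRing.Theory Num.Theory.
Local Open Scope ring_scope.

Lemma real_sum_mul_sqr_le (R : numDomainType) (I : finType) (a b : I -> R) :
  (forall i, a i \is Num.real) -> (forall i, b i \is Num.real) ->
  (\sum_i a i * b i) ^+ 2 <= (\sum_i a i ^+ 2) * (\sum_i b i ^+ 2).
Proof.
move=> ar br; rewrite -subr_ge0 -(pmulr_rge0 _ (ltr0Sn R 1)).
have lagrange : 2 * ((\sum_i a i ^+ 2) * (\sum_i b i ^+ 2) - (\sum_i a i * b i) ^+ 2)
    = \sum_i \sum_j (a i * b j - a j * b i) ^+ 2.
  have expand i j : (a i * b j - a j * b i) ^+ 2
      = (a i ^+ 2 * b j ^+ 2 - a i * b i * (a j * b j))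
        + (a j ^+ 2 * b i ^+ 2 - a j * b j * (a i * b i)) by ring.
  symmetry; under eq_bigr => i _ do under eq_bigr => j _ do rewrite expand.
  rewrite (eq_bigr _ (fun i _ => big_split _ _ _ _ _)) big_split /=.
  rewrite [X in _ + X]exchange_big /= mulr_natl mulr2n expr2 !big_distrlr /= -!sumrB.
  by congr (_ + _); apply: eq_bigr => i _; rewrite sumrB.
rewrite lagrange; apply: sumr_ge0 => i _; apply: sumr_ge0 => j _.
by apply: real_exprn_even_ge0; rewrite // rpredB ?rpredM.
Qed.

Section RankOne.
Variables (F : fieldType) (k : nat).
Implicit Types (u : 'cV[F]_k) (w : 'rV[F]_k).

Lemma mulmx_rank1 u w u' w' :
  (u *m w) *m (u' *m w') = (w *m u') 0 0 *: (u *m w').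
Proof. by rewrite mulmxA -(mulmxA u) scalemxAl -mul_mx_scalar -mx11_scalar. Qed.

Lemma eigenvalue_rank1 u w g :
  eigenvalue (u *m w) g -> g = 0 \/ g = (w *m u) 0 0.
Proof.
case/eigenvalueP => z zuw z_neq0; set t := (z *m u) 0 0.
have zu : z *m u = t%:M by rewrite [LHS]mx11_scalar.
have {}zuw : t *: w = g *: z by rewrite -zuw mulmxA zu mul_scalar_mx.
have [t0 | t_neq0] := eqVneq t 0.
  left; move/eqP: zuw; rewrite t0 scale0r eq_sym scaler_eq0 (negbTE z_neq0).
  by rewrite orbF => /eqP.
right; apply: (mulIf t_neq0).
have := congr1 (fun v => (v *m u) 0 0) zuw.
by rewrite /= -!scalemxAl mxE [RHS]mxE -/t mulrC => ->.
Qed.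

Lemma eigenvalue_rank1_dot u w : w != 0 -> eigenvalue (u *m w) ((w *m u) 0 0).
Proof.
move=> w_neq0; apply/eigenvalueP; exists w => //.
by rewrite mulmxA -mul_scalar_mx -mx11_scalar.
Qed.

Lemma eigenvalue0_rank1 u w : (1 < k)%N -> eigenvalue (u *m w) 0.
Proof.
move=> k_gt1; rewrite /eigenvalue /eigenspace raddf0 subr0 -mxrank_eq0 mxrank_ker.
rewrite subn_eq0 -ltnNge; apply: leq_ltn_trans k_gt1.
exact: leq_trans (mxrankM_maxl u w) (rank_leq_col u).
Qed.
End RankOne.

Lemma norm_le_bigmax_norm (R : numDomainType) (s : seq R) a :
  a \in s -> `|a| <= \big[Num.max/0]_(b <- s) `|b|.
Proof.
elim: s => // b s IHs; rewrite inE big_cons.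
have max_real : \big[Num.max/0]_(c <- s) `|c| \is Num.real.
  by apply: bigmax_real => // c _; apply: normr_real.
rewrite comparable_le_max ?real_comparable ?normr_real //.
by case/predU1P => [-> | /IHs ->]; rewrite ?lexx ?orbT.
Qed.

Lemma norm_le_specrad (C : numClosedFieldType) n (M : 'M[C]_n) a : eigenvalue M a -> `|a| <= specrad M.
Proof.
rewrite eigenvalue_root_char /specrad /eigseq.
case: closed_field_poly_normal => s /= ->.
rewrite (monicP (char_poly_monic M)) scale1r root_prod_XsubC.
exact: norm_le_bigmax_norm.
Qed.

Section Homogenization.
Variable C : numClosedFieldType.

Definition dotmx {n} (x y : 'cV[C]_n) : C := (cadj x *m y) 0 0.

Lemma dotmxE n (x y : 'cV[C]_n) : dotmx x y = \sum_i (x i 0)^* * y i 0.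
Proof. by rewrite /dotmx mxE; apply: eq_bigr => i _; rewrite !mxE. Qed.

Lemma vnorm_ge0 n (x : 'cV[C]_n) : 0 <= vnorm x.
Proof. by rewrite sqrtC_ge0 sumr_ge0 // => i _; apply: exprn_ge0. Qed.

Lemma norm_dotmx_le n (x y : 'cV[C]_n) : `|dotmx x y| <= vnorm x * vnorm y.
Proof.
have sqr_ge0 (z : 'cV[C]_n) : 0 <= \sum_i `|z i 0| ^+ 2.
  by apply: sumr_ge0 => i _; apply: exprn_ge0.
rewrite dotmxE; apply: le_trans (ler_norm_sum _ _ _) _.
under eq_bigr do rewrite normrM norm_conjC.
have sum_ge0 : 0 <= \sum_i `|x i 0| * `|y i 0|.
  by apply: sumr_ge0 => i _; apply: mulr_ge0.
rewrite /vnorm -sqrtCM ?nnegrE // -(sqrCK sum_ge0) ler_sqrtC ?nnegrE ?mulr_ge0 //.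
by apply: real_sum_mul_sqr_le => i; apply: normr_real.
Qed.

Variable m : nat.
Implicit Types (x y : 'cV[C]_m).

Definition homcol x : 'cV[C]_(1 + m) := col_mx 1%:M x.

Lemma cadj_homcol x : cadj (homcol x) = row_mx 1%:M (cadj x).
Proof. by rewrite /cadj /homcol map_col_mx tr_col_mx map_scalar_mx rmorph1 tr_scalar_mx. Qed.

Lemma dotmx_homcol x y : dotmx (homcol x) (homcol y) = 1 + dotmx x y.
Proof. by rewrite /dotmx cadj_homcol mul_row_col mul1mx mxE [1%:M _ _]mxE. Qed.

Lemma cadj_homcol_neq0 x : cadj (homcol x) != 0.
Proof.
apply/negP => /eqP/(congr1 (fun M : 'rV_(1 + m) => M 0 (lshift m 0))).
by rewrite cadj_homcol row_mxEl !mxE /= => /eqP; rewrite oner_eq0.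
Qed.
End Homogenization.

Arguments dotmx {C n} x y.
Arguments homcol {C m} x.

Lemma norm_sub_mul1D_le (C : numFieldType) (q a b c d : C) :
  0 <= q -> q < 1 -> `|a| <= q -> `|b| <= q -> `|c| <= q -> `|d| <= q ->
  `|(1 + a) * (1 + b) - (1 + c) * (1 + d)|
    <= 4 * q / (1 - q) ^+ 2 * `|1 + c| * `|1 + d|.
Proof.
move=> q_ge0 q_lt1 a_le b_le c_le d_le.
have one_sub_q_gt0 : 0 < 1 - q by rewrite subr_gt0.
have norm1D_ge (z : C) : `|z| <= q -> 1 - q <= `|1 + z|.
  by move=> z_le; apply: le_trans (lerB_normD 1 z); rewrite normr1 lerD2l lerN2.
have norm1D_le (z : C) : `|z| <= q -> `|1 + z| <= 1 + q.
  by move=> z_le; apply: le_trans (ler_normD 1 z) _; rewrite normr1 lerD2l.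
have normB_le (z z' : C) : `|z| <= q -> `|z'| <= q -> `|z - z'| <= 2 * q.
  by move=> z_le z'_le; apply: le_trans (ler_normB z z') _; rewrite mulr_natl mulr2n lerD.
set P := `|1 + c|.
have P_ge : 1 - q <= P := norm1D_ge c c_le.
have split_diff : `|(1 + a) * (1 + b) - (1 + c) * (1 + d)| <= 2 * q * (1 + q) + P * (2 * q).
  have -> : (1 + a) * (1 + b) - (1 + c) * (1 + d) = (a - c) * (1 + b) + (1 + c) * (b - d) by ring.
  apply: le_trans (ler_normD _ _) _; rewrite !normrM.
  by rewrite lerD ?ler_wpM2l ?ler_pM ?normB_le ?norm1D_le.
have absorb_const : 2 * q * (1 + q) + P * (2 * q) <= 4 * q / (1 - q) * P.
  rewrite -subr_ge0.
  have -> : 4 * q / (1 - q) * P - (2 * q * (1 + q) + P * (2 * q))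
      = 2 * q * (1 + q) * (P - (1 - q)) / (1 - q) by field; rewrite gt_eqF.
  apply: divr_ge0; last exact: ltW.
  by rewrite !mulr_ge0 // ?subr_ge0 // addr_ge0.
apply: le_trans split_diff _; apply: le_trans absorb_const _.
have -> : 4 * q / (1 - q) ^+ 2 * P * `|1 + d| = 4 * q / (1 - q) * P * (`|1 + d| / (1 - q)).
  by field; rewrite gt_eqF.
apply: ler_peMr; first by rewrite !mulr_ge0 ?invr_ge0 ?(ltW one_sub_q_gt0) ?normr_ge0.
by rewrite ler_pdivlMr // mul1r norm1D_ge.
Qed.

Section Sr.
Variables (C : numClosedFieldType) (m : nat).
Implicit Types (x y : 'cV[C]_m) (lam : C).

Definition Srmx lam x y : 'M[C]_(1 + m) := (lam *: homcol y) *m cadj (homcol x).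

Lemma Sr_mxE x y lam :
  lam *: block_mx (1%:M : 'M[C]_1) (cadj x) y (y *m cadj x) = Srmx lam x y.
Proof.
by rewrite /Srmx cadj_homcol /homcol -scalemxAl mul_col_row mul1mx mulmx1 mul1mx.
Qed.

Lemma dotmx_homcolZ x y lam :
  (cadj (homcol x) *m (lam *: homcol y)) 0 0 = lam * (1 + dotmx x y).
Proof. by rewrite -scalemxAr mxE -dotmx_homcol. Qed.

Lemma mul_Srmx x y x' y' lam mu :
  Srmx lam x y *m Srmx mu x' y' = Srmx (lam * mu * (1 + dotmx x y')) x' y.
Proof.
by rewrite mulmx_rank1 dotmx_homcolZ scalemxAl scalerA mulrC mulrA.
Qed.

Lemma eigenvalue_Srmx x y lam g :
  eigenvalue (Srmx lam x y) g -> g = 0 \/ g = lam * (1 + dotmx x y).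
Proof. by rewrite -dotmx_homcolZ; apply: eigenvalue_rank1. Qed.

Lemma eigenvalue_Srmx_dot x y lam : eigenvalue (Srmx lam x y) (lam * (1 + dotmx x y)).
Proof. by rewrite -dotmx_homcolZ eigenvalue_rank1_dot ?cadj_homcol_neq0. Qed.

Lemma eigenvalue0_Srmx x y lam : (0 < m)%N -> eigenvalue (Srmx lam x y) 0.
Proof. by move=> m_gt0; apply: eigenvalue0_rank1. Qed.

Lemma Sr_semigroup (rr : C) : is_semigroup (Sr m rr).
Proof.
move=> _ _ [x [y [lam [xr yr ->]]]] [x' [y' [mu [x'r y'r ->]]]].
by exists x', y, (lam * mu * (1 + dotmx x y')); rewrite !Sr_mxE mul_Srmx.
Qed.

Lemma Sr_submultiplicative (rr : C) : (0 < m)%N -> 0 <= rr -> rr < 1 ->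
  eps_submultiplicative (4 * rr ^+ 2 / (1 - rr ^+ 2) ^+ 2) (Sr m rr).
Proof.
move=> m_gt0 rr_ge0 rr_lt1; set q := rr ^+ 2; set eps := 4 * q / (1 - q) ^+ 2.
have q_ge0 : 0 <= q by apply: exprn_ge0.
have q_lt1 : q < 1 by rewrite expr_lt1.
have eps_ge0 : 0 <= eps.
  by rewrite divr_ge0 ?mulr_ge0 ?exprn_ge0 // subr_ge0 ltW.
have dot_le x y : vnorm x < rr -> vnorm y < rr -> `|dotmx x y| <= q.
  move=> xr yr; apply: le_trans (norm_dotmx_le x y) _.
  by rewrite /q expr2 ler_pM ?vnorm_ge0 ?ltW.
have specrad_ge0 x y lam : 0 <= specrad (Srmx lam x y).
  by rewrite -(normr0 C) norm_le_specrad ?eigenvalue0_Srmx.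
move=> _ _ [x [y [lam [xr yr ->]]]] [x' [y' [mu [x'r y'r ->]]]] g.
rewrite !Sr_mxE mul_Srmx => /eigenvalue_Srmx[-> | ->].
  exists 0, 0; split; rewrite /spectrum ?eigenvalue0_Srmx //.
  by rewrite mulr0 subr0 normr0; apply: mulr_ge0; first apply: mulr_ge0.
exists (lam * (1 + dotmx x y)), (mu * (1 + dotmx x' y')).
split; rewrite /spectrum ?eigenvalue_Srmx_dot //.
have -> : lam * mu * (1 + dotmx x y') * (1 + dotmx x' y)
          - lam * (1 + dotmx x y) * (mu * (1 + dotmx x' y'))
    = lam * mu * ((1 + dotmx x y') * (1 + dotmx x' y)
                  - (1 + dotmx x y) * (1 + dotmx x' y')) by ring.
apply: (@le_trans _ _ (eps * `|lam * (1 + dotmx x y)| * `|mu * (1 + dotmx x' y')|)).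
  have := ler_wpM2l (normr_ge0 (lam * mu)) (norm_sub_mul1D_le q_ge0 q_lt1
    (dot_le _ _ xr y'r) (dot_le _ _ x'r yr) (dot_le _ _ xr yr) (dot_le _ _ x'r y'r)).
  by rewrite !normrM -/eps; congr (_ <= _); ring.
apply: ler_pM; [exact: mulr_ge0 | exact: normr_ge0 | rewrite ler_wpM2l // |];
  by apply: norm_le_specrad; apply: eigenvalue_Srmx_dot.
Qed.
End Sr.

Theorem mainTheorem5 (R : realType) (n : nat) (hn : (2 <= n)%N) (r : R)
  (hr0 : 0 < r) (hr1 : r < 1) :
  is_semigroup (Sr n.-1 ((r%:C)%C : R[i])) /\
  eps_submultiplicative (((4 * r ^+ 2 / (1 - r ^+ 2) ^+ 2)%:C)%C : R[i])
                        (Sr n.-1 ((r%:C)%C : R[i])).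
Proof.
split; first exact: Sr_semigroup.
have m_gt0 : (0 < n.-1)%N by rewrite -ltnS prednK // ltnW.
have -> : ((4 * r ^+ 2 / (1 - r ^+ 2) ^+ 2)%:C)%C
          = 4 * (r%:C)%C ^+ 2 / (1 - (r%:C)%C ^+ 2) ^+ 2 :> R[i].
  by rewrite !(rmorphM, rmorphXn, rmorphB, rmorph1, fmorphV, rmorph_nat).
by apply: Sr_submultiplicative; rewrite // ?ler0c ?ltW // -[1 : R[i]]/(1%:C)%C ltcR.
Qed.
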